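(* Consider the $k$-item $k$-bidder environment (any set of at most $k$ bidders may be allocated; there are $k$ real bidders) in which the auctioneer communicates with bidders through private channels, as described in the context, and real bidder values are drawn i.i.d. from the exponential distribution with mean $1$. Then there exists a sufficiently large $k$ such that the Deferred-Revelation Auction (DRA) is not credible for a collateral equal to the monopoly reserve $1$.
   Context: Bidders are quasi-linear with independent values; the exponential distribution with mean $1$ has CDF $1-e^{-t}$, virtual value $v-1$, monopoly reserve $1$. The DRA: every participant (real bidders and any fake bids fabricated by the auctioneer) commits, via a perfectly hiding, perfectly binding, non-malleable commitment scheme, to an identifier and a bid and deposits collateral $f$; the committed bids are later revealed or concealed, and collateral of concealed bids is burnt; then, among revealed bids, the feasible set maximizing the sum of (reported) virtual values is allocated (lexicographic tie-breaking) and each allocated bidder pays its critical bid. Private communication model: there is no public ledger; bidders learn about other bids only through messages from the auctioneer. The auctioneer may show different sets of committed bids to different bidders, may trigger the phases separately for each bidder (e.g. learn some bidders' revealed bids before acting toward others), and may conceal a fake bid from some bidders but reveal it to others; the auctioneer can provably burn the collateral of a concealed fake bid, which costs it $f$ once per fake bid regardless of how many bidders it was shown to. Each bidder's outcome is computed from the bids it has been shown, and the set of real bidders allocated must be feasible. The auctioneer's revenue is real bidders' payments minus burnt collateral. The DRA is credible for collateral $f$ if, when real bidders bid truthfully, the auctioneer maximizes expected revenue by fabricating no bids and behaving honestly. *)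

From HB Require Import structures.
From mathcomp Require Import all_boot all_order all_algebra.
From mathcomp Require Import all_classical all_reals all_analysis.

Set Implicit Arguments.
Unset Strict Implicit.
Unset Printing Implicit Defensive.

Import Order.TTheory GRing.Theory Num.Theory.
Local Open Scope ring_scope.

Definition expCDF {R : realType} (t : R) : R := 1 - expR (- t).
Definition expPDF {R : realType} (t : R) : R := expR (- t).

Definition vval {R : realType} (t : R) : R := t - (1 - expCDF t) / expPDF t.

(* Monopoly reserve of Exp(1): the zero of the virtual value, i.e. 1. *)
Definition monopoly_reserve {R : realType} : R := 1.

(* Bid identifiers: real bidders 'I_k and fake bids 'I_M.                    *)

Section DRA.
Variables (R : realType) (k M : nat).

Definition bid_id := ('I_k + 'I_M)%type.

Definition feasible (S A : {set bid_id}) : bool := (A \subset S) && (#|A| <= k)%N.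

Definition vwelfare (b : bid_id -> R) (A : {set bid_id}) : R :=
  \sum_(x in A) vval (b x).

(* Allocated set: a feasible set maximizing the virtual welfare, ties broken
   by a fixed deterministic (enumeration-order) rule. *)
Definition dra_alloc (S : {set bid_id}) (b : bid_id -> R) : {set bid_id} :=
  Order.arg_max [set y : bid_id | false] (feasible S) (vwelfare b).

Definition upd (b : bid_id -> R) (i : 'I_k) (x : R) : bid_id -> R :=
  fun y => if y == inl i then x else b y.

Definition crit_bid (i : 'I_k) (S : {set bid_id}) (b : bid_id -> R) : R :=
  inf [set x : R | inl i \in dra_alloc S (upd b i x)]%classic.

(* The auctioneer processes the real bidders in an (adaptively chosen) order;*)
(* when bidder (sorder v t) is processed, the set of committed bids shown to *)
(* it (sview) is fixed, and afterwards the auctioneer learns its revealed    *)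
(* bid. Fake bid x has committed bid value sfake v x. sreveal v i is the set *)
(* of fake bids the auctioneer reveals to bidder i (decided at the end).     *)

Record strategy := Strategy {
  sorder  : k.-tuple R -> 'I_k -> 'I_k;
  sview   : k.-tuple R -> 'I_k -> {set bid_id};
  sfake   : k.-tuple R -> 'I_M -> R;
  sreveal : k.-tuple R -> 'I_k -> {set 'I_M} }.

Definition admissible (s : strategy) : Prop :=
  (forall v, injective (sorder s v)) /\
  (forall v i x, x \in sreveal s v i -> inr x \in sview s v i) /\
  (* non-anticipation: what happens at step t (who is processed, which
     commitments it is shown, and the committed values of the fakes shown)
     depends only on the bids revealed at earlier steps *)
  (forall (v w : k.-tuple R) (t : 'I_k),
      (forall u : 'I_k, (u < t)%N -> tnth v (sorder s v u) = tnth w (sorder s v u)) ->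
      [/\ sorder s w t = sorder s v t,
          sview s w (sorder s v t) = sview s v (sorder s v t) &
          forall x, inr x \in sview s v (sorder s v t) -> sfake s w x = sfake s v x]).

Definition bidv (s : strategy) (v : k.-tuple R) : bid_id -> R :=
  fun y => match y with inl j => tnth v j | inr x => sfake s v x end.

(* revealed bids bidder i has been shown: its own, the real bids whose
   commitments it was shown (real bidders always reveal), and the fake bids
   shown and revealed to it *)
Definition shown (s : strategy) (v : k.-tuple R) (i : 'I_k) : {set bid_id} :=
  inl i |: [set y in sview s v i |
             match y with inl _ => true | inr x => x \in sreveal s v i end].

Definition payment (s : strategy) (v : k.-tuple R) (i : 'I_k) : R :=
  if inl i \in dra_alloc (shown s v i) (bidv s v)
  then crit_bid i (shown s v i) (bidv s v) else 0.

(* fake bids concealed from at least one bidder they were shown to: their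
   collateral is burnt (once per fake bid) *)
Definition burnt (s : strategy) (v : k.-tuple R) : {set 'I_M} :=
  [set x | [exists i, (inr x \in sview s v i) && (x \notin sreveal s v i)]].

Definition revenue (f : R) (s : strategy) (v : k.-tuple R) : R :=
  \sum_(i < k) payment s v i - f *+ #|burnt s v|.

End DRA.

Definition honest (R : realType) (k : nat) : strategy R k 0 :=
  @Strategy R k 0 (fun _ t => t)
    (fun _ i => [set y : bid_id k 0 | if y is inl j then j != i else false])
    (fun _ _ => 0) (fun _ _ => [set x : 'I_0 | false]).

Fixpoint expE {R : realType} (n : nat) : (n.-tuple R -> R) -> \bar R :=
  match n return (n.-tuple R -> R) -> \bar R with
  | 0 => fun g => (g [tuple])%:E
  | n'.+1 => fun g =>
      (\int[exponential_prob (1 : R)]_(t in [set: R]%classic)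
          expE (fun s : n'.-tuple R => g [tuple of t :: s]))%E
  end.

Definition credible (R : realType) (f : R) (k : nat) : Prop :=
  forall (M : nat) (s : strategy R k M),
    admissible s ->
    measurable_fun [set: k.-tuple R]%classic (revenue f s) ->
    (expE (revenue f s) <= expE (revenue f (honest R k)))%E.

(* The auctioneer fabricates k fake bids of value 2 and shows every real
   bidder these fakes and nothing else.  A bidder with value in ]1, 2] would
   lose against k rivals bidding 2, so one fake is concealed from it: facing
   k - 1 rivals it wins at the reserve price 1.  Every other bidder faces all
   k fakes and pays the critical bid 2 whenever its value exceeds 2.  This
   burns at most one collateral f = 1, while each bidder now pays 1 on
   ]1, +oo[ plus 1 on ]2, +oo[, instead of at most 1 on [1, +oo[ in the honest
   DRA (where it has only k - 1 rivals).  The expected gain k e^-2 - 1 is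
   positive as soon as k >= 17. *)

From mathcomp Require Import all_boot all_order all_algebra.
From mathcomp Require Import all_classical all_reals all_analysis.
From mathcomp Require Import ring lra measurable_realfun.

Set Implicit Arguments.
Unset Strict Implicit.
Unset Printing Implicit Defensive.

Import Order.TTheory GRing.Theory Num.Theory.
Local Open Scope ring_scope.

Lemma vvalE (R : realType) (t : R) : vval t = t - 1.
Proof.
rewrite /vval /expCDF /expPDF opprB addrCA subrr addr0 divff //.
by rewrite gt_eqF // expR_gt0.
Qed.

Lemma inf_threshold (R : realType) (W : set R) (c : R) :
  (forall x, c < x -> W x) -> (forall x, x < c -> ~ W x) -> inf W = c.
Proof.
move=> W_gt W_lt.
have c_lb : lbound W c by move=> x Wx; rewrite leNgt; apply/negP => /W_lt.
have c_le : c <= inf W.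
  by apply: lb_le_inf => //; exists (c + 1); apply: W_gt; lra.
apply/eqP; rewrite eq_le c_le andbT leNgt; apply/negP => c_lt.
have : inf W <= (c + inf W) / 2.
  by apply: ge_inf; [exists c | apply: W_gt; lra].
lra.
Qed.

Section Allocation.
Variables (R : realType) (k M : nat).
Implicit Types (S A : {set bid_id k M}) (b : bid_id k M -> R).

Lemma dra_allocP S b :
  feasible S (dra_alloc S b) /\
  forall A, feasible S A -> vwelfare b A <= vwelfare b (dra_alloc S b).
Proof.
have feasible0 : feasible S [set y : bid_id k M | false].
  rewrite (_ : [set y | false] = finset.set0); last by apply/setP => y; rewrite !inE.
  by rewrite /feasible finset.sub0set cards0.
rewrite /dra_alloc; case: (arg_maxP (vwelfare b) feasible0) => A fA A_max.
by split => // B /A_max.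
Qed.

Lemma feasible_swap S A y z : feasible S A -> y \in S -> y \notin A -> z \in A ->
  feasible S (y |: (A :\ z)).
Proof.
case/andP => AS Ak yS yA zA; rewrite /feasible finset.subUset finset.sub1set yS.
rewrite (fintype.subset_trans (finset.subsetDl _ _) AS) cardsU1.
rewrite !inE negb_and yA orbT /=.
by rewrite (cardsD1 z A) zA in Ak.
Qed.

Lemma vwelfare_swap b A y z : y \notin A -> z \in A ->
  vwelfare b (y |: (A :\ z)) = vwelfare b A + vval (b y) - vval (b z).
Proof.
move=> yA zA; rewrite /vwelfare big_setU1 /=; last by rewrite !inE negb_and yA orbT.
by rewrite [in RHS](big_setD1 z zA) /=; ring.
Qed.

(* Exchange argument: otherwise adding [y] to the allocation, or swapping it
   for a bidder of lower virtual value, would increase the virtual welfare. *)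
Lemma mem_dra_alloc S b y : y \in S -> 0 < vval (b y) ->
  (forall A, feasible S A -> y \notin A ->
     (#|A| < k)%N \/ exists2 z, z \in A & vval (b z) < vval (b y)) ->
  y \in dra_alloc S b.
Proof.
move=> yS y_pos y_beats; apply/negPn/negP => yA.
have [fA A_max] := dra_allocP S b; set A := dra_alloc S b in yA fA A_max.
case: (y_beats A fA yA) => [A_small | [z zA z_lt]].
  have fyA : feasible S (y |: A).
    case/andP: fA => AS _.
    by rewrite /feasible finset.subUset finset.sub1set yS AS cardsU1 yA.
  by have := A_max _ fyA; rewrite /vwelfare big_setU1 //=; lra.
have := A_max _ (feasible_swap fA yS yA zA).
by rewrite vwelfare_swap //; lra.
Qed.

Lemma notin_dra_alloc S b y :
  (forall A, feasible S A -> y \in A ->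
     vval (b y) < 0 \/ exists z, [/\ z \in S, z \notin A & vval (b y) < vval (b z)]) ->
  y \notin dra_alloc S b.
Proof.
move=> y_loses; apply/negP => yA.
have [fA A_max] := dra_allocP S b; set A := dra_alloc S b in yA fA A_max.
case: (y_loses A fA yA) => [y_neg | [z [zS zA z_gt]]].
  have fAy : feasible S (A :\ y).
    case/andP: fA => AS Ak.
    rewrite /feasible (fintype.subset_trans (finset.subsetDl _ _) AS).
    by rewrite (leq_trans (subset_leq_card (finset.subsetDl _ _)) Ak).
  by have := A_max _ fAy; rewrite /vwelfare [X in _ <= X](big_setD1 y yA) /=; lra.
have := A_max _ (feasible_swap fA zS zA yA).
by rewrite vwelfare_swap //; lra.
Qed.

End Allocation.

Section Threshold.
Variables (R : realType) (k M : nat).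
Implicit Types (S : {set bid_id k M}) (b : bid_id k M -> R).

(* Nothing is required at [x = c], where tie-breaking decides. *)
Definition alloc_threshold S b (i : 'I_k) (c : R) : Prop :=
  (forall x, c < x -> inl i \in dra_alloc S (upd b i x)) /\
  (forall x, x < c -> inl i \notin dra_alloc S (upd b i x)).

Lemma crit_bid_threshold S b i c : alloc_threshold S b i c -> crit_bid i S b = c.
Proof.
by case=> alloc_gt alloc_lt; apply: inf_threshold => // x /alloc_lt /negP.
Qed.

Lemma upd_id b i : upd b i (b (inl i)) = b.
Proof. by apply: funext => y; rewrite /upd; case: eqP => [->|]. Qed.

Lemma upd_same b i x : upd b i x (inl i) = x.
Proof. by rewrite /upd eqxx. Qed.

Lemma upd_other b i x y : y != inl i -> upd b i x y = b y.
Proof. by rewrite /upd => /negbTE ->. Qed.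

Lemma threshold_few_rivals S b i : inl i \in S -> (#|S :\ inl i| < k)%N ->
  alloc_threshold S b i 1.
Proof.
move=> iS few; split=> x x1.
  apply: mem_dra_alloc => //; first by rewrite upd_same vvalE subr_gt0.
  move=> A /andP [AS _] iA; left; apply: leq_ltn_trans few.
  by apply: subset_leq_card; rewrite finset.subsetD1 AS iA.
by apply: notin_dra_alloc => A _ _; left; rewrite upd_same vvalE subr_lt0.
Qed.

Lemma threshold_uniform_rivals S b i r : 1 <= r -> inl i \in S ->
  (k <= #|S :\ inl i|)%N -> (forall y, y \in S -> y != inl i -> b y = r) ->
  alloc_threshold S b i r.
Proof.
move=> r1 iS many rivals; split=> x xr.
  apply: mem_dra_alloc => //; first by rewrite upd_same vvalE subr_gt0; lra.
  move=> A /andP [AS _] iA; have [|A_full] := ltnP #|A| k; first by left.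
  have /finset.set0Pn [z zA] : A != finset.set0.
    by rewrite -card_gt0 (leq_trans _ A_full) // (leq_ltn_trans _ (ltn_ord i)).
  have zi : z != inl i by apply: contraNneq iA => <-.
  have zS : z \in S by exact: (fintype.subsetP AS).
  right; exists z => //.
  by rewrite upd_same upd_other // (rivals z zS zi) !vvalE; lra.
apply: notin_dra_alloc => A /andP [AS Ak] iA; right.
have /fintype.subsetPn [z] : ~~ (S :\ inl i \subset A :\ inl i).
  apply: contraTN Ak => /subset_leq_card SA; rewrite -ltnNge.
  by rewrite (cardsD1 (inl i) A) iA add1n ltnS (leq_trans many).
rewrite !inE => /andP [zi zS]; rewrite zi /= => zA; exists z; split => //.
by rewrite upd_same upd_other // (rivals z zS zi) !vvalE; lra.
Qed.

End Threshold.

Section Payment.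
Variables (R : realType) (k M : nat) (s : strategy R k M) (v : k.-tuple R).
Variables (i : 'I_k) (c : R).
Hypothesis threshold : alloc_threshold (shown s v i) (bidv s v) i c.

Let alloc_own_bid : dra_alloc (shown s v i) (bidv s v) =
  dra_alloc (shown s v i) (upd (bidv s v) i (tnth v i)).
Proof. by rewrite -[tnth v i]/(bidv s v (inl i)) upd_id. Qed.

Lemma payment_gt : c < tnth v i -> payment s v i = c.
Proof.
move=> ci; rewrite /payment alloc_own_bid (proj1 threshold _ ci).
exact: crit_bid_threshold.
Qed.

Lemma payment_lt : tnth v i < c -> payment s v i = 0.
Proof. by move=> ic; rewrite /payment alloc_own_bid (negbTE (proj2 threshold _ ic)). Qed.

Lemma payment_le : 0 <= c -> payment s v i <= c.
Proof. by rewrite /payment (crit_bid_threshold threshold); case: ifP. Qed.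

End Payment.

Section Attack.
Variables (R : realType) (K : nat).
Local Notation k := K.+1.

Definition attack : strategy R k k :=
  @Strategy R k k (fun _ t => t)
    (fun _ _ => [set y : bid_id k k | if y is inr _ then true else false])
    (fun _ _ => 2)
    (fun v i => if tnth v i \in `]1, 2] then [set~ ord0] else [set: 'I_k]).

Lemma attack_admissible : admissible attack.
Proof.
split; first by move=> v.
by split=> [v i x _ | v w t _]; [rewrite inE | split].
Qed.

Lemma shown_attack v i : shown attack v i :\ inl i = inr @: sreveal attack v i.
Proof.
apply/setP => -[j|x]; rewrite !inE /=.
  by rewrite orbF andNb; apply/esym/imsetP => -[].
by rewrite mem_imset // => ? ? [].
Qed.

Lemma card_rivals_attack v i :
  #|shown attack v i :\ inl i| = if tnth v i \in `]1, 2] then K else k.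
Proof.
rewrite shown_attack card_imset /=; last by move=> ? ? [].
by case: ifP => _; rewrite ?cardsC1 ?cardsT card_ord.
Qed.

Lemma rivals_attack v i y :
  y \in shown attack v i -> y != inl i -> bidv attack v y = 2.
Proof. by case: y => [j|x] //; rewrite !inE orbF => ->. Qed.

Definition attack_gain (t : R) : R := \1_`]1, +oo[ t + \1_`]2, +oo[ t.

Lemma payment_attack v i : payment attack v i = attack_gain (tnth v i).
Proof.
have iS : inl i \in shown attack v i by rewrite !inE eqxx.
have rivals := card_rivals_attack v i.
rewrite /attack_gain !indicE !mem_setE !in_itv /= !andbT.
case: ifP rivals => [vi few | vi many].
  have thr := threshold_few_rivals (bidv attack v) iS (eq_leq (congr1 S few)).
  move: vi; rewrite in_itv /= => /andP [v1 v2].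
  by rewrite (payment_gt thr) // v1 ltNge v2 addr0.
have thr : alloc_threshold (shown attack v i) (bidv attack v) i 2.
  by apply: threshold_uniform_rivals; rewrite ?many //; [lra | exact: rivals_attack].
have [v2 | v2] := ltrP 2 (tnth v i).
  have v1 : 1 < tnth v i by lra.
  by rewrite (payment_gt thr) // v1.
have v1 : tnth v i <= 1.
  by move: vi; rewrite in_itv /= v2 andbT => /negbT; rewrite -leNgt.
rewrite (payment_lt thr); last lra.
by rewrite ltNge v1 addr0.
Qed.

Definition concealing (v : k.-tuple R) : bool := [exists i, tnth v i \in `]1, 2]].

Lemma card_burnt_attack v : #|burnt attack v| = concealing v.
Proof.
have -> : burnt attack v = if concealing v then [set ord0] else finset.set0.
  apply/setP => x; rewrite !inE /=; case: ifP => [/existsP [i vi] | no_vi].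
    rewrite finset.in_set1; apply/idP/idP => [/existsP [j] | /eqP ->].
      by case: ifP => _; rewrite !inE // negbK.
    by apply/existsP; exists i; rewrite vi !inE negbK.
  rewrite finset.in_set0; apply/negbTE/existsP => -[j].
  case: ifP => vj; rewrite !inE //= => _.
  by move/negbT/existsP: no_vi; apply; exists j.
by case: (concealing v); rewrite ?cards1 ?cards0.
Qed.

Lemma revenue_attack v :
  revenue 1 attack v = \sum_(i < k) attack_gain (tnth v i) - (concealing v)%:R.
Proof.
by rewrite /revenue card_burnt_attack; under eq_bigr do rewrite payment_attack.
Qed.

Lemma revenue_attack_ge v :
  - 1 + \sum_(i < k) attack_gain (tnth v i) <= revenue 1 attack v.
Proof. by rewrite revenue_attack addrC lerD2l lerN2; case: (concealing v). Qed.

Local Open Scope classical_set_scope.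

Lemma measurable_concealing :
  measurable_fun [set: k.-tuple R] (fun v => (concealing v)%:R : R).
Proof.
pose E := \bigcup_(i in [set: 'I_k])
  ((fun v : k.-tuple R => tnth v i) @^-1` [set` `]1, 2]%R]).
have -> : (fun v => (concealing v)%:R : R) = \1_E.
  apply/funext => v; rewrite indicE; congr (nat_of_bool _)%:R.
  apply/idP/idP => [/existsP [i vi] | /set_mem [i _ vi]].
    by apply/mem_set; exists i.
  by apply/existsP; exists i.
apply: measurable_indic; apply: fin_bigcup_measurable => // i _.
by rewrite -[X in measurable X]setTI; apply: measurable_tnth.
Qed.

Lemma measurable_attack_gain : measurable_fun [set: R] attack_gain.
Proof. by rewrite /attack_gain; apply: measurable_funD; apply: measurable_indic. Qed.

Lemma measurable_revenue_attack : measurable_fun [set: k.-tuple R] (revenue 1 attack).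
Proof.
rewrite (funext revenue_attack).
apply: measurable_funB; last exact: measurable_concealing.
apply: measurable_sum => i.
by apply: measurableT_comp; [exact: measurable_attack_gain | exact: measurable_tnth].
Qed.

End Attack.

Section Honest.
Variables (R : realType) (k : nat).

Lemma threshold_honest v i :
  alloc_threshold (shown (honest R k) v i) (bidv (honest R k) v) i 1.
Proof.
apply: threshold_few_rivals; first exact: setU11.
apply: (@leq_ltn_trans #|[set~ (inl i : bid_id k 0)]|).
  by apply: subset_leq_card; apply/fintype.subsetP => y; rewrite !inE => /andP [].
by rewrite cardsC1 card_sum !card_ord addn0 ltn_predL (leq_ltn_trans _ (ltn_ord i)).
Qed.

Lemma revenue_honest_le v :
  revenue 1 (honest R k) v <= \sum_(i < k) \1_`[1, +oo[ (tnth v i).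
Proof.
rewrite /revenue; have -> : #|burnt (honest R k) v| = 0%N.
  by apply/eqP; rewrite -leqn0 (leq_trans (max_card _)) ?card_ord.
rewrite subr0; apply: ler_sum => i _; have thr := threshold_honest v i.
rewrite indicE; have [vi | vi] := ltrP (tnth v i) 1.
  by rewrite (payment_lt thr).
by rewrite mem_set /= ?in_itv /= ?vi //; exact: payment_le thr ler01.
Qed.

End Honest.

Local Open Scope classical_set_scope.

(* No measurability is needed: the integral is monotone through its definition
   as a difference of suprema over simple functions. *)
Lemma le_integral_pointwise d (T : measurableType d) (R : realType)
    (mu : set T -> \bar R) (D : set T) (f g : T -> \bar R) :
  (forall x, f x <= g x)%E -> (\int[mu]_(x in D) f x <= \int[mu]_(x in D) g x)%E.
Proof.
move=> fg; rewrite /integral; apply: leeB; apply: ereal_sup_le => _ /= [h hf <-];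
  exists h => //= x; apply: le_trans (hf x) _.
  by rewrite !funeposE /patch; case: ifP => _ //; apply: le_max2.
by rewrite !funenegE /patch; case: ifP => _ //; apply: le_max2; rewrite ?leeN2.
Qed.

Lemma expE_le (R : realType) n (g h : n.-tuple R -> R) :
  (forall v, g v <= h v) -> (expE g <= expE h)%E.
Proof.
elim: n g h => [|n IH] g h gh /=; first by rewrite lee_fin.
by apply: le_integral_pointwise => t; apply: IH => w.
Qed.

Section ExponentialTail.
Variables (R : realType) (rate : R).
Hypothesis rate_gt0 : 0 < rate.
(* The library's probability instance on [exponential_prob rate] takes the
   proof of [0 < rate] as an argument. *)
Local Notation P :=
  (exponential_distribution_exponential_prob__canonical__probability_measure_Probability
     rate_gt0).

Lemma exponential_prob_itv_gt (x : R) : 0 < x ->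
  P `]x, +oo[ = (expR (- rate * x))%:E.
Proof.
move=> x_gt0; rewrite -(setCK `]x, +oo[) probability_setC; last exact: measurableC.
have -> : ~` `]x, +oo[ = `]-oo, 0[ `|` `[0, x]%classic.
  apply/seteqP; split => t /=; rewrite !in_itv /= ?andbT.
    move/negP; rewrite -leNgt => tx.
    by have [t0 | t0] := ltrP t 0; [left | right; rewrite ?tx].
  move=> t_le; apply/negP; rewrite -leNgt.
  by case: t_le => [/ltW t0 | /andP [_ //]]; rewrite (le_trans t0) // ltW.
rewrite measureU //; last first.
  apply/seteqP; split => t //=; rewrite !in_itv /=.
  by case=> t0 /andP [/(lt_le_trans t0)]; rewrite ltxx.
rewrite [X in (_ - (X + _))%E](_ : _ = 0%E); last first.
  by apply: integral0_eq => t /=; rewrite in_itv /= => /lt0_exponential_pdf ->.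
rewrite [X in (_ - (_ + X))%E](_ : _ = (1 - (expR (- rate * x))%:E)%E); last first.
  exact: exponential_prob_itv0c.
by rewrite add0e oppeB // addeA subee // add0e.
Qed.

Lemma exponential_prob_itv_ge (x : R) : 0 < x ->
  P `[x, +oo[ = (expR (- rate * x))%:E.
Proof.
move=> x_gt0; rewrite -exponential_prob_itv_gt //.
have -> : `[x, +oo[ = [set x] `|` `]x, +oo[%classic.
  apply/seteqP; split => t /=; rewrite !in_itv /= !andbT.
    by rewrite le_eqVlt => /orP [/eqP ->|]; [left | right].
  by case => [->|/ltW].
rewrite measureU //; last by apply/seteqP; split => t //= [->]; rewrite in_itv /= ltxx.
by rewrite [X in (X + _)%E](_ : _ = 0%E) ?add0e //; exact: integral_set1.
Qed.

End ExponentialTail.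

Section Expectation.
Variable R : realType.
Local Notation P :=
  (exponential_distribution_exponential_prob__canonical__probability_measure_Probability
     (@ltr01 R)).

Lemma expE_affine_sum n (phi : R -> R) (a e : R) :
  P.-integrable setT (EFin \o phi) -> (\int[P]_x (phi x)%:E = e%:E)%E ->
  expE (fun v : n.-tuple R => a + \sum_(i < n) phi (tnth v i)) = (a + n%:R * e)%:E.
Proof.
move=> phi_int phi_e; elim: n a => [|n IH] a /=; first by rewrite big_ord0 mul0r.
rewrite -[exponential_prob 1]/(P : set _ -> \bar R).
transitivity (\int[P]_t ((a + n%:R * e)%:E + (phi t)%:E))%E.
  apply: eq_integral => t _; rewrite -EFinD addrAC -(IH (a + phi t)).
  congr expE; apply/funext => w; rewrite big_ord_recl tnth0 addrA.
  by congr (_ + _); apply: eq_bigr => i _; rewrite tnthS.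
rewrite integralD //; last exact: finite_measure_integrable_cst.
rewrite integral_cst // [X in (_ * X)%E](_ : _ = 1%E); last exact: probability_setT.
by rewrite mule1 phi_e -EFinD mulrSr mulrDl mul1r addrA.
Qed.

Lemma integral_indic_itv_ge (x : R) : 0 < x ->
  (\int[P]_t (\1_`[x, +oo[ t)%:E = (expR (- x))%:E)%E.
Proof.
move=> x_gt0; rewrite integral_indic // setIT.
by rewrite -[X in expR X]mulN1r; exact: exponential_prob_itv_ge.
Qed.

Lemma integrable_attack_gain : P.-integrable setT (EFin \o @attack_gain R).
Proof.
rewrite (_ : EFin \o _ =
  (fun t => (\1_`]1, +oo[ t)%:E) \+ (fun t => (\1_`]2, +oo[ t)%:E))%E.
  by apply: integrableD => //; apply: integrable_indic.
by apply/funext => t; rewrite /= EFinD.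
Qed.

Lemma integral_attack_gain :
  (\int[P]_t (attack_gain t)%:E = (expR (-1) + expR (-2))%:E)%E.
Proof.
rewrite /attack_gain; under eq_integral do rewrite EFinD.
rewrite integralD //; [|exact: integrable_indic..].
rewrite !integral_indic // !setIT EFinD.
by congr (_ + _)%E; rewrite -mulN1r; exact: exponential_prob_itv_gt.
Qed.

End Expectation.

Lemma attack_beats_honest (R : realType) (K : nat) :
  1 < K.+1%:R * expR (-2 : R) ->
  (expE (revenue 1 (honest R K.+1)) < expE (revenue 1 (attack R K)))%E.
Proof.
move=> k_large.
have honest_le (v : K.+1.-tuple R) :
    revenue 1 (honest R K.+1) v <= 0 + \sum_(i < K.+1) \1_`[1, +oo[ (tnth v i).
  by rewrite add0r; exact: revenue_honest_le.
apply: le_lt_trans (expE_le honest_le) _.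
apply: lt_le_trans _ (expE_le (@revenue_attack_ge R K)).
rewrite (expE_affine_sum _ _ (integrable_indic _ _) (integral_indic_itv_ge ltr01)) //.
rewrite (expE_affine_sum _ _ (integrable_attack_gain R) (integral_attack_gain R)).
rewrite lte_fin; lra.
Qed.

Lemma dra_not_credible (R : realType) (K : nat) :
  1 < K.+1%:R * expR (-2 : R) ->
  ~ credible (@monopoly_reserve R) K.+1.
Proof.
move=> k_large credible_k.
have := credible_k _ _ (attack_admissible R K) (@measurable_revenue_attack R K).
by rewrite leNgt attack_beats_honest.
Qed.

Lemma expRN2_ge (R : realType) : 1 / 16 <= expR (-2 : R).
Proof.
have -> : (-2 : R) = 4%:R * (- (1 / 2)) by rewrite mulrN; congr (- _); field.
rewrite expRM_natl; have := expR_ge1Dx (- (1 / 2) : R).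
set y := expR _ => y_ge; have y2 : 1 / 4 <= y ^+ 2 by rewrite expr2; nra.
by rewrite (exprM y 2 2) [X in _ <= X]expr2; nra.
Qed.

Theorem mainTheorem8 (R : realType) :
  exists k : nat, ~ credible (@monopoly_reserve R) k.
Proof. by exists 17; apply: dra_not_credible; have := @expRN2_ge R; lra. Qed.
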